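(* Let $n\geq 2$, $N=\binom{n}{2}$ and $q\geq N$. For $j=1,\dots,q$ let $L^j$ be an $n\times 2$ matrix whose $2n$ entries are independent indeterminates (distinct matrices using disjoint sets of indeterminates). For $i=1,\dots,N$ let $p^i(L^j)$ denote the $i$-th $2\times 2$ minor of $L^j$ (the minors indexed by the $N$ pairs of rows in a fixed order). Form the $N\times q$ matrix with entries $p^i(L^j)$. Then the determinant of any $N\times N$ submatrix of this matrix (obtained by choosing $N$ columns) is an irreducible polynomial.
   Context: Polynomials are over $\mathbb{R}$ in all the indeterminates appearing. *)

From HB Require Import structures.
From mathcomp Require Import all_boot all_algebra.
From mathcomp Require Import reals.
From mathcomp Require Import mpoly.
Set Implicit Arguments. Unset Strict Implicit. Unset Printing Implicit Defensive.
Import GRing.Theory.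
Local Open Scope ring_scope.

(* Irreducible element of a (commutative) ring: not a unit, and any
   factorization has a unit factor (0 = 0 * 0 is thus excluded). *)
Definition irreducible_elt (A : comUnitRingType) (p : A) : Prop :=
  p \isn't a GRing.unit /\
  forall a b : A, p = a * b -> a \is a GRing.unit \/ b \is a GRing.unit.

(* Indeterminates: one for each (j, r, c), j < q (matrix L^j), r < n (row),
   c < 2 (column). *)
Definition nvars (q n : nat) : nat := #|{: 'I_q * ('I_n * 'I_2)}|.

Definition Lvar (R : realType) (q n : nat) (j : 'I_q) (r : 'I_n) (c : 'I_2)
  : {mpoly R[nvars q n]} := 'X_(enum_rank (j, (r, c))).

(* The pairs of rows r1 < r2, as sorted 2-tuples; enumerated in a fixed order
   (the enum order of this finset). There are 'C(n,2) of them (card_row_pairs). *)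
Definition row_pairs (n : nat) : {set 2.-tuple 'I_n} :=
  [set t : 2.-tuple 'I_n | sorted ltn (map val t)].

Definition minor2 (R : realType) (q n : nat) (t : 2.-tuple 'I_n) (j : 'I_q)
  : {mpoly R[nvars q n]} :=
  \det (\matrix_(a < 2, b < 2) Lvar R j (tnth t a) b).

Definition plucker_mx (R : realType) (q n : nat)
  : 'M[{mpoly R[nvars q n]}]_(#|row_pairs n|, q) :=
  \matrix_(i < #|row_pairs n|, j < q) minor2 R (enum_val i) j.

Lemma card_row_pairs n : #|row_pairs n| = 'C(n, 2).
Proof. by rewrite /row_pairs card_ltn_sorted_tuples. Qed.

From HB Require Import structures.
From mathcomp Require Import all_boot all_algebra.
From mathcomp Require Import reals.
From mathcomp Require Import mpoly.
From mathcomp Require Import zify ring.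
Set Implicit Arguments. Unset Strict Implicit. Unset Printing Implicit Defensive.
Import GRing.Theory.
Local Open Scope ring_scope.

(* The determinant D has degree exactly one in the variables of each column of
   each L^(s k), and involves no other variable.  In a factorization D = a * b
   degrees add, so each such column of variables occurs in exactly one factor.
   Both columns of one L^(s k) occur in the same factor: otherwise the
   substitution copying one column onto the other, which kills D because the
   minors of L^(s k) then vanish, would fix one factor and be invertible on the
   other.  In the same way all the L^(s k) occur in the same factor, since
   copying L^(s k) onto L^(s l) makes two columns of the matrix equal.  So the
   other factor is a nonzero constant.  D itself is nonzero: evaluating L^(s k)
   at the 0/1 matrix whose rows realise the k-th pair of rows gives the identity
   matrix. *)

Lemma eq_mmap (k : nat) (R S : nzRingType) (f1 f2 : R -> S) (h1 h2 : 'I_k -> S)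
    (p : {mpoly R[k]}) :
  f1 =1 f2 -> h1 =1 h2 -> mmap f1 h1 p = mmap f2 h2 p.
Proof.
move=> ef eh; apply: eq_bigr => m _.
by rewrite ef (mmap1_eq _ eh).
Qed.

Lemma rmorph_mmap (k : nat) (R : nzRingType) (S S' : comNzRingType)
    (f : R -> S) (h : 'I_k -> S) (phi : {rmorphism S -> S'}) (p : {mpoly R[k]}) :
  phi (mmap f h p) = mmap (phi \o f) (phi \o h) p.
Proof.
rewrite /mmap rmorph_sum; apply: eq_bigr => m _.
rewrite rmorphM rmorph_prod; congr (_ * _); apply: eq_bigr => i _.
exact: rmorphXn.
Qed.

Section MPolyComRing.
Variables (R : comNzRingType) (k : nat).
Local Notation MP := {mpoly R[k]}.
Implicit Types (p f g : MP) (h : 'I_k -> MP) (P Q : pred 'I_k).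

Definition msubst h : MP -> MP := mmap (@mpolyC k R) h.

HB.instance Definition _ h := GRing.RMorphism.on (msubst h).

Lemma msubstM h : {morph msubst h : x y / x * y}.
Proof. exact: rmorphM. Qed.

Lemma msubstX h i : msubst h 'X_i = h i.
Proof. by rewrite /msubst mmapX mmap1U. Qed.

Lemma msubstC h c : msubst h c%:MP = c%:MP.
Proof. exact: mmapC. Qed.

Lemma eq_msubst h1 h2 p : h1 =1 h2 -> msubst h1 p = msubst h2 p.
Proof. exact: eq_mmap. Qed.

Lemma msubst_id p : msubst (fun i => 'X_i) p = p.
Proof.
rewrite -[RHS]comp_mpoly_id; apply: eq_mmap => // i.
by rewrite tnth_map tnth_ord_tuple.
Qed.

Lemma msubst_comp h1 h2 p : msubst h1 (msubst h2 p) = msubst (msubst h1 \o h2) p.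
Proof.
by rewrite [LHS]rmorph_mmap; apply: eq_mmap => // c /=; rewrite msubstC.
Qed.

Definition mzero P : MP -> MP := msubst (fun i => if P i then 0 else 'X_i).

Definition free_of P p : Prop := mzero P p = p.

Lemma mzero_comp P Q p : mzero P (mzero Q p) = mzero (fun i => P i || Q i) p.
Proof.
rewrite /mzero msubst_comp; apply: eq_msubst => i /=.
by case: (Q i); rewrite ?orbT ?rmorph0 // orbF msubstX.
Qed.

Lemma free_of_sub P Q p : (forall i, P i -> Q i) -> free_of Q p -> free_of P p.
Proof.
move=> PQ fQ; rewrite /free_of -{1}fQ mzero_comp -[RHS]fQ.
by apply: eq_msubst => i; case: (boolP (P i)) => [/PQ ->|].
Qed.

Lemma free_ofU P Q p : free_of P p -> free_of Q p -> free_of (fun i => P i || Q i) p.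
Proof. by move=> fP fQ; rewrite /free_of -mzero_comp fQ fP. Qed.

Lemma msubst_free P h p :
  free_of P p -> (forall i, ~~ P i -> h i = 'X_i) -> msubst h p = p.
Proof.
move=> fP hX; rewrite -{1}fP /mzero msubst_comp -[RHS]fP; apply: eq_msubst => i /=.
by case: (boolP (P i)) => [_|/hX]; rewrite ?rmorph0 // msubstX.
Qed.

Lemma free_of_const p : (forall i, free_of (pred1 i) p) -> p = (meval (fun=> 0) p)%:MP.
Proof.
move=> f1.
have fall (r : seq 'I_k) : free_of (fun i => i \in r) p.
  elim: r => [|i r IHr]; first by rewrite /free_of /mzero -[RHS]msubst_id.
  by apply: (free_of_sub _ (free_ofU (f1 i) IHr)) => j; rewrite inE.
have fT : free_of xpredT p by apply: (free_of_sub _ (fall (enum 'I_k))) => i; rewrite mem_enum.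
by rewrite -[LHS]fT /mzero [RHS]rmorph_mmap; apply: eq_mmap.
Qed.

End MPolyComRing.

Section MPolyIdomain.
Variables (R : idomainType) (k : nat).
Local Notation MP := {mpoly R[k]}.
Implicit Types (p : MP) (P : pred 'I_k).

Lemma msubst_mul_eq0 (A B : pred 'I_k) (h h' : 'I_k -> MP) (f g : MP) :
    free_of B f -> free_of A g -> f != 0 ->
    (forall i, ~~ B i -> h i = 'X_i) -> (forall i, ~~ A i -> msubst h' (h i) = 'X_i) ->
  msubst h (f * g) = 0 -> g = 0.
Proof.
move=> fB gA nzf hB hA; rewrite msubstM (msubst_free fB hB) => /eqP.
rewrite mulf_eq0 (negbTE nzf) /= => /eqP hg0.
by rewrite -(msubst_free gA hA) -msubst_comp hg0 rmorph0.
Qed.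

(* [mscale P p] multiplies each variable of [P] in [p] by the polynomial
   variable, so that [pdeg P p] is the degree of [p] in the variables of [P]. *)
Definition mscale P : MP -> {poly MP} :=
  mmap (@polyC MP \o @mpolyC k R) (fun i => 'X ^+ P i * ('X_i)%:P).

HB.instance Definition _ P := GRing.RMorphism.on (mscale P).

Definition pdeg P p : nat := (size (mscale P p)).-1.

Lemma mscaleB P : {morph mscale P : x y / x - y}.
Proof. exact: rmorphB. Qed.

Lemma mscaleM P : {morph mscale P : x y / x * y}.
Proof. exact: rmorphM. Qed.

Lemma mscaleX P i : mscale P 'X_i = 'X ^+ P i * ('X_i)%:P.
Proof. by rewrite /mscale mmapX mmap1U. Qed.

Lemma mscale_eval1 P p : (mscale P p).[1] = p.
Proof.
rewrite -[RHS]msubst_id -horner_evalE rmorph_mmap; apply: eq_mmap => [c|i] /=.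
  by rewrite horner_evalE hornerC.
by rewrite horner_evalE hornerM hornerXn expr1n mul1r hornerC.
Qed.

Lemma mscale_eval0 P p : (mscale P p).[0] = mzero P p.
Proof.
rewrite -horner_evalE rmorph_mmap; apply: eq_mmap => [c|i] /=.
  by rewrite horner_evalE hornerC.
rewrite horner_evalE hornerM hornerXn hornerC expr0n.
by case: (P i); rewrite ?mul0r ?mul1r.
Qed.

Lemma mscale_eq0 P p : (mscale P p == 0) = (p == 0).
Proof.
apply/eqP/eqP => [p0|->]; last exact: rmorph0.
by rewrite -(mscale_eval1 P p) p0 horner0.
Qed.

Lemma pdegM P p1 p2 : p1 != 0 -> p2 != 0 -> pdeg P (p1 * p2) = pdeg P p1 + pdeg P p2.
Proof.
have sizeM (f g : {poly MP}) : f != 0 -> g != 0 -> (size (f * g)).-1 = (size f).-1 + (size g).-1.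
  by move=> nzf nzg; rewrite size_mul // (polySpred nzf) (polySpred nzg) addSn addnS.
rewrite -(mscale_eq0 P p1) -(mscale_eq0 P p2) => nz1 nz2.
by rewrite /pdeg mscaleM; apply: sizeM.
Qed.

Lemma pdeg_unit P u : u \is a GRing.unit -> pdeg P u = 0%N.
Proof.
move=> /(rmorph_unit (mscale P)); rewrite poly_unitE => /andP[/eqP size1 _].
by rewrite /pdeg size1.
Qed.

Lemma pdeg_scaleXn P p e : p != 0 -> mscale P p = p%:P * 'X^e -> pdeg P p = e.
Proof. by move=> nz Ep; rewrite /pdeg Ep size_mulXn ?polyC_eq0 // size_polyC nz addn1. Qed.

Lemma pdeg_eq0_free P p : pdeg P p = 0%N -> free_of P p.
Proof.
move=> deg0; have /size1_polyC Ep : (size (mscale P p) <= 1)%N by move: deg0; rewrite /pdeg; lia.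
by rewrite /free_of -mscale_eval0 -[RHS](mscale_eval1 P) Ep !hornerC.
Qed.

End MPolyIdomain.

Lemma free_of_all_unit (R : fieldType) (k : nat) (p : {mpoly R[k]}) :
  p != 0 -> (forall i, free_of (pred1 i) p) -> p \is a GRing.unit.
Proof.
move=> nz /free_of_const Ep; rewrite Ep fmorph_unit.
by apply: contra nz => /eqP c0; rewrite Ep c0 rmorph0.
Qed.

Lemma det_mx22 (S : comNzRingType) (A : 'M[S]_2) :
  \det A = A 0 0 * A 1 1 - A 0 1 * A 1 0.
Proof.
rewrite (expand_det_row _ 0) !big_ord_recl big_ord0 addr0 /cofactor !det_mx11 /=.
rewrite !mxE /= expr0 mul1r expr1 mulN1r mulrN.
by congr (A _ _ * A _ _ - A _ _ * A _ _); apply: val_inj.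
Qed.

Lemma det_eq_cols (S : comNzRingType) (m : nat) (A : 'M[S]_m) (j1 j2 : 'I_m) :
  j1 != j2 -> (forall i, A i j1 = A i j2) -> \det A = 0.
Proof.
by move=> ne eqA; rewrite -det_tr; apply: (determinant_alternate ne) => i; rewrite !mxE.
Qed.

Lemma ord2P (c : 'I_2) : c = 0 \/ c = 1.
Proof. by case: c => [[|[|//]] lt_c]; [left|right]; apply: val_inj. Qed.

Section PluckerDeterminant.
Variables (R : realType) (q n : nat).
Local Notation K := (nvars q n).
Local Notation MP := {mpoly R[K]}.
Local Notation T := ('I_q * ('I_n * 'I_2))%type.
Local Notation N := #|row_pairs n|.

Definition xvar (t : T) : MP := 'X_(enum_rank t).

Definition vars (P : pred T) : pred 'I_K := fun i => P (enum_val i).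

Lemma vars_rank P t : vars P (enum_rank t) = P t.
Proof. by rewrite /vars enum_rankK. Qed.

Definition col (j : 'I_q) (c : 'I_2) : pred T := fun t => (t.1 == j) && (t.2.2 == c).
Definition block (j : 'I_q) : pred T := fun t => t.1 == j.

Definition rename (sigma : T -> T) : MP -> MP :=
  msubst (fun i => xvar (sigma (enum_val i))).

HB.instance Definition _ sigma := GRing.RMorphism.on (rename sigma).

Lemma rename_det sigma m (A : 'M[MP]_m) :
  rename sigma (\det A) = \det (map_mx (rename sigma) A).
Proof. exact/esym/det_map_mx. Qed.

Lemma rename_xvar sigma t : rename sigma (xvar t) = xvar (sigma t).
Proof. by rewrite /rename /xvar msubstX enum_rankK. Qed.

Lemma rename_minor2 sigma t j : rename sigma (minor2 R t j) =
  \det (\matrix_(a < 2, b < 2) xvar (sigma (j, (tnth t a, b)))).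
Proof.
rewrite /minor2 rename_det; congr (\det _); apply/matrixP => a b.
by rewrite !mxE; apply: rename_xvar.
Qed.

Lemma rename_mul_eq0 (sigma sigma' : T -> T) (A B : pred T) (f g : MP) :
    free_of (vars B) f -> free_of (vars A) g -> f != 0 ->
    (forall t, ~~ B t -> sigma t = t) -> (forall t, ~~ A t -> sigma' (sigma t) = t) ->
  rename sigma (f * g) = 0 -> g = 0.
Proof.
move=> fB gA nzf fixB invA.
apply: (msubst_mul_eq0 (h' := fun i => xvar (sigma' (enum_val i))) fB gA nzf) => i.
  by rewrite /vars => /fixB ->; rewrite /xvar enum_valK.
by rewrite /vars => /invA inv; rewrite -/(rename sigma' _) rename_xvar inv /xvar enum_valK.
Qed.

Lemma mscale_minor2 j c t j' :
  mscale (vars (col j c)) (minor2 R t j') = (minor2 R t j')%:P * 'X^(j' == j).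
Proof.
rewrite /minor2 det_mx22 !mxE mscaleB !mscaleM !mscaleX !vars_rank /col /=.
by case: (j' == j); [case: (ord2P c) => ->|]; rewrite /= !rmorphB !rmorphM /=; ring.
Qed.

Variables (s : 'I_N -> 'I_q) (s_incr : {homo s : i j / (i < j)%N}).
Local Notation plucker_det := (\det (colsub s (plucker_mx R q n))).

Lemma s_inj : injective s.
Proof.
move=> k l eq_s; apply/val_inj/eqP; case: (ltngtP k l) => // /s_incr;
  by rewrite eq_s ltnn.
Qed.

Lemma mscale_plucker_det j c :
  mscale (vars (col j c)) plucker_det = plucker_det%:P * 'X^[exists k, s k == j].
Proof.
rewrite -det_map_mx.
have -> : map_mx (mscale (vars (col j c))) (colsub s (plucker_mx R q n)) =
    map_mx polyC (colsub s (plucker_mx R q n)) *m diag_mx (\row_k 'X^(s k == j)).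
  by apply/matrixP => i k; rewrite mul_mx_diag !mxE mscale_minor2.
rewrite det_mulmx det_diag det_map_mx; congr (_ * _).
case: existsP => [[k /eqP sk]|no_k].
  rewrite (bigD1 k) //= mxE sk eqxx big1 ?mulr1 // => l nlk.
  by rewrite mxE -sk inj_eq ?(negbTE nlk) //; apply: s_inj.
by rewrite big1 // => k _; rewrite mxE; case: eqP => // sk; case: no_k; exists k; rewrite sk.
Qed.

(* Evaluating L^(s k) at [point] gives the 0/1 matrix selecting the k-th pair
   of rows. *)
Definition point (i : 'I_K) : R :=
  let: (j, (r, c)) := enum_val i in
  if [pick k | s k == j] is Some k then (r == tnth (enum_val k) c)%:R else 0.

Lemma point_rank k r c : point (enum_rank (s k, (r, c))) = (r == tnth (enum_val k) c)%:R.
Proof.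
rewrite /point enum_rankK; case: pickP => [l /eqP/s_inj -> //|/(_ k)].
by rewrite eqxx.
Qed.

Lemma row_pair_lt t : t \in row_pairs n -> (tnth t 0%R < tnth t 1%R)%N.
Proof. by rewrite inE; case: t => [[|a [|b [|? ?]]] //]; rewrite /= andbT. Qed.

Lemma meval_point_minor2 i k : meval point (minor2 R (enum_val i) (s k)) = (i == k)%:R.
Proof.
rewrite /minor2 det_mx22 !mxE mevalB !mevalM !mevalXU !point_rank -!natrM !mulnb.
set t := enum_val i; set u := enum_val k.
have lt_t : (tnth t 0%R < tnth t 1%R)%N by apply/row_pair_lt/enum_valP.
have lt_u : (tnth u 0%R < tnth u 1%R)%N by apply/row_pair_lt/enum_valP.
have -> : (tnth t 0 == tnth u 1) && (tnth t 1 == tnth u 0) = false.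
  apply/negbTE/negP => /andP[/eqP e1 /eqP e2]; move: lt_t; rewrite e1 e2 => lt_u'.
  by have := ltn_trans lt_u lt_u'; rewrite ltnn.
have -> : (tnth t 0 == tnth u 0) && (tnth t 1 == tnth u 1) = (i == k).
  apply/andP/eqP => [[/eqP e0 /eqP e1]|ik]; last by rewrite /t /u ik !eqxx.
  by apply/enum_val_inj/eq_from_tnth => a; case: (ord2P a) => ->.
by rewrite subr0.
Qed.

Lemma plucker_det_neq0 : plucker_det != 0.
Proof.
have : meval point plucker_det = 1.
  rewrite -det_map_mx -[RHS](det1 _ N); congr (\det _); apply/matrixP => i k.
  by rewrite !mxE; apply: meval_point_minor2.
by move=> ev1; apply/eqP => D0; move: ev1; rewrite D0 meval0 => /eqP; rewrite eq_sym oner_eq0.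
Qed.

Definition copy_col j c c' (t : T) : T := if col j c' t then (j, (t.2.1, c)) else t.
Definition copy_block j j' (t : T) : T := if block j' t then (j, t.2) else t.

Lemma rename_copy_col_det k c c' : c != c' -> rename (copy_col (s k) c c') plucker_det = 0.
Proof.
move=> neq; rewrite rename_det (expand_det_col _ k) big1 // => i _.
rewrite !mxE rename_minor2 (@det_eq_cols _ _ _ c c') ?mul0r // => a.
by rewrite !mxE /copy_col /col /= !eqxx [c == c'](negbTE neq).
Qed.

Lemma rename_copy_block_det k l : k != l -> rename (copy_block (s k) (s l)) plucker_det = 0.
Proof.
move=> nkl; have nskl : s k != s l by rewrite (inj_eq s_inj).
rewrite rename_det (det_eq_cols nkl) // => i; rewrite !mxE !rename_minor2.
by congr (\det _); apply/matrixP => a b; rewrite !mxE /copy_block /block /= eqxx (negbTE nskl).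
Qed.

Lemma plucker_det_nonunit (k0 : 'I_N) : plucker_det \isn't a GRing.unit.
Proof.
apply/negP => /(pdeg_unit (vars (col (s k0) 0))).
rewrite (pdeg_scaleXn plucker_det_neq0 (mscale_plucker_det _ _)).
by have -> : [exists k, s k == s k0] by apply/existsP; exists k0.
Qed.

Section Factorization.
Variables (a b : MP).
Hypothesis Dab : a * b = plucker_det.

Lemma factor_neq0 : a != 0 /\ b != 0.
Proof. by apply/andP; rewrite -negb_or -mulf_eq0 Dab plucker_det_neq0. Qed.

Lemma pdeg_factors j c :
  pdeg (vars (col j c)) a + pdeg (vars (col j c)) b = [exists k, s k == j].
Proof.
have [nza nzb] := factor_neq0.
by rewrite -pdegM // Dab (pdeg_scaleXn plucker_det_neq0 (mscale_plucker_det _ _)).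
Qed.

Lemma factor_free_col j c : free_of (vars (col j c)) a \/ free_of (vars (col j c)) b.
Proof.
have := pdeg_factors j c; case: [exists _, _] => /= deg; last first.
  by left; apply: pdeg_eq0_free; lia.
have [/pdeg_eq0_free|/pdeg_eq0_free] :
  pdeg (vars (col j c)) a = 0%N \/ pdeg (vars (col j c)) b = 0%N by lia.
  by left.
by right.
Qed.

Lemma factor_free_outside j c : ~~ [exists k, s k == j] -> free_of (vars (col j c)) b.
Proof.
move/negbTE=> no_k; have := pdeg_factors j c; rewrite no_k /= => deg.
by apply: pdeg_eq0_free; lia.
Qed.

Lemma factor_free_col_eq k c c' :
  free_of (vars (col (s k) c')) a -> free_of (vars (col (s k) c)) b -> c = c'.
Proof.
move=> fa fb; apply/eqP/negP => /negP neq; have [nza nzb] := factor_neq0.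
suff b0 : b = 0 by rewrite b0 eqxx in nzb.
apply: (rename_mul_eq0 (sigma := copy_col (s k) c c') (sigma' := copy_col (s k) c' c) fa fb nza).
- by move=> t /negbTE; rewrite /copy_col => ->.
- move=> [j [r d]]; rewrite /copy_col /col /=.
  case: (boolP ((j == s k) && (d == c'))) => /= [/andP[/eqP -> /eqP ->] _|_ /negbTE ->];
  by rewrite ?eqxx.
- by rewrite Dab rename_copy_col_det.
Qed.

Lemma factor_free_block_eq k l :
  free_of (vars (block (s l))) a -> free_of (vars (block (s k))) b -> k = l.
Proof.
move=> fa fb; apply/eqP/negP => /negP neq; have [nza nzb] := factor_neq0.
suff b0 : b = 0 by rewrite b0 eqxx in nzb.
apply: (rename_mul_eq0 (sigma := copy_block (s k) (s l)) (sigma' := copy_block (s l) (s k)) fa fb nza).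
- by move=> t /negbTE; rewrite /copy_block => ->.
- move=> [j rd]; rewrite /copy_block /block /=.
  case: (boolP (j == s l)) => /= [/eqP -> _|_ /negbTE ->]; by rewrite ?eqxx.
- by rewrite Dab rename_copy_block_det.
Qed.

Lemma free_col_free_block k c :
  free_of (vars (col (s k) c)) b -> free_of (vars (block (s k))) b.
Proof.
move=> fb; have fcol c' : free_of (vars (col (s k) c')) b.
  by case: (factor_free_col (s k) c') => // fa; rewrite -(factor_free_col_eq fa fb).
apply: (free_of_sub _ (free_ofU (fcol 0) (fcol 1))) => i.
by rewrite /vars /block /col => ->; case: (ord2P (enum_val i).2.2) => ->.
Qed.

End Factorization.

Lemma factor_free_block (a b : MP) k : a * b = plucker_det ->
  free_of (vars (block (s k))) a \/ free_of (vars (block (s k))) b.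
Proof.
move=> Dab; case: (factor_free_col Dab (s k) 0) => f0; last first.
  by right; exact: (free_col_free_block (k := k) Dab f0).
by left; exact: (free_col_free_block (k := k) (etrans (mulrC b a) Dab) f0).
Qed.

Lemma factor_free_blocks (a b : MP) k l : a * b = plucker_det ->
  free_of (vars (block (s k))) b -> free_of (vars (block (s l))) b.
Proof.
move=> Dab fk; case: (factor_free_block l Dab) => // fl.
by rewrite -(factor_free_block_eq Dab fl fk).
Qed.

Lemma factor_unit (a b : MP) k : a * b = plucker_det ->
  free_of (vars (block (s k))) b -> b \is a GRing.unit.
Proof.
move=> Dab fk; have [_ nzb] := factor_neq0 Dab; apply: free_of_all_unit nzb _ => i.
case: (boolP [exists l, s l == (enum_val i).1]) => [/existsP[l /eqP sl]|none].
  apply: (free_of_sub _ (factor_free_blocks l Dab fk)) => i' /eqP ->.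
  by rewrite /vars /block sl.
apply: (free_of_sub _ (factor_free_outside Dab (enum_val i).2.2 none)) => i' /eqP ->.
by rewrite /vars /col !eqxx.
Qed.

End PluckerDeterminant.

Theorem lemma3p2 (R : realType) (n q : nat) (hn : (2 <= n)%N)
  (hq : ('C(n, 2) <= q)%N)
  (s : 'I_#|row_pairs n| -> 'I_q) (hs : {homo s : i j / (i < j)%N}) :
  irreducible_elt (\det (colsub s (plucker_mx R q n))).
Proof.
have N_gt0 : (0 < #|row_pairs n|)%N by rewrite card_row_pairs bin_gt0.
pose k0 : 'I_#|row_pairs n| := Ordinal N_gt0.
split=> [|a b /esym Dab]; first exact: plucker_det_nonunit hs k0.
have [fa|fb] := factor_free_block hs k0 Dab; last by right; apply: factor_unit Dab fb.
by left; apply: (factor_unit hs (etrans (mulrC b a) Dab) fa).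
Qed.
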